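(* Let $M$ be a matroid flock on a finite set $E$. There is a unique function $g:\mathbb{Z}^E\to\mathbb{Z}$ such that (1) $g(0)=0$, and (2) $g(\alpha+e_I)=g(\alpha)+r_\alpha(I)$ for all $\alpha\in\mathbb{Z}^E$ and $I\subseteq E$.
   Context: $e_I:=\sum_{i\in I}e_i$ ($e_i$ unit vectors), $\mathbf{1}:=e_E$. A matroid flock of rank $d$ on $E$ is a map $M$ assigning to each $\alpha\in\mathbb{Z}^E$ a matroid $M_\alpha$ on $E$ of rank $d$ with (MF1) $M_\alpha/i=M_{\alpha+e_i}\setminus i$ for all $\alpha$, $i\in E$ (contraction, deletion); and (MF2) $M_\alpha=M_{\alpha+\mathbf{1}}$ for all $\alpha$. $r_\alpha$ denotes the rank function of $M_\alpha$. *)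

From mathcomp Require Import all_boot all_order all_algebra.
Set Implicit Arguments. Unset Strict Implicit. Unset Printing Implicit Defensive.
Import Order.TTheory GRing.Theory Num.Theory.

Definition is_matroid_rank (E : finType) (r : {set E} -> nat) : Prop :=
  [/\ forall A : {set E}, r A <= #|A|,
      forall A B : {set E}, A \subset B -> r A <= r B
    & forall A B : {set E}, r (A :|: B) + r (A :&: B) <= r A + r B]%N.

Definition zvec (E : finType) := {ffun E -> int}.

Definition shift (E : finType) (alpha : zvec E) (I : {set E}) : zvec E :=
  [ffun x => (alpha x + (x \in I)%:Z)%R].

Definition zvec0 (E : finType) : zvec E := [ffun _ => 0%R].

(* A matroid flock of rank d: M alpha is the rank function of M_alpha.
   (MF1) M_alpha / i = M_{alpha+e_i} \ i as matroids on E - i, i.e. for all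
   A ⊆ E - i: r_alpha(A ∪ i) - r_alpha(i) = r_{alpha+e_i}(A).
   (MF2) M_alpha = M_{alpha+1}. *)
Definition matroid_flock (E : finType) (d : nat) (M : zvec E -> {set E} -> nat)
  : Prop :=
  [/\ forall alpha, is_matroid_rank (M alpha) /\ M alpha setT = d,
      forall alpha (i : E) (A : {set E}), A \subset ~: [set i] ->
        (M alpha (i |: A) - M alpha [set i])%N = M (shift alpha [set i]) A
    & forall alpha (A : {set E}), M alpha A = M (shift alpha setT) A].

(** The singleton ranks [f a i := r_a({i})] form a closed discrete 1-form on
    [Z^E]: applying (MF1) twice, [r_a({i,j}) = f a i + f (a + e_i) j
    = f a j + f (a + e_j) i].  Integrating [f] coordinate by coordinate gives a
    potential [G] with [G (a + e_i) = G a + f a i], normalised by [G 0 = 0].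
    Peeling off one element of [I] at a time with (MF1) upgrades the unit
    steps to [G (a + e_I) = G a + r_a(I)].  Two such functions differ by a
    function invariant under every [+ e_i], hence constant on [Z^E], hence
    equal since both vanish at [0]. *)
From mathcomp Require Import all_boot all_order all_algebra zify.
From Stdlib Require Import FunctionalExtensionality.
Set Implicit Arguments. Unset Strict Implicit. Unset Printing Implicit Defensive.
Import Order.TTheory GRing.Theory Num.Theory.
Local Open Scope ring_scope.

Lemma int_succ_const (T : Type) (h : int -> T) :
  (forall m, h (m + 1) = h m) -> forall m, h m = h 0.
Proof.
move=> hS; elim/int_rect => [//|n IH|n IH].
  by rewrite -addn1 PoszD hS.
by rewrite -IH -(hS (- n.+1%:Z)) -addn1 PoszD opprD addrNK.
Qed.

(** [zsum c m] is the signed sum [c 0 + ... + c (m - 1)], read as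
    [- (c m + ... + c (-1))] when [m < 0]. *)
Definition zsum (c : int -> int) (m : int) : int :=
  match m with
  | Posz n => \sum_(t < n) c t
  | Negz n => - \sum_(t < n.+1) c (Negz t)
  end.

Lemma zsum0 c : zsum c 0 = 0.
Proof. exact: big_ord0. Qed.

Lemma zsumS c m : zsum c (m + 1) = zsum c m + c m.
Proof.
case: m => [n|[|n]].
- by rewrite -PoszD addn1 /= big_ord_recr.
- by rewrite /= big_ord1 big_ord0 addrC subrr.
- have -> : Negz n.+1 + 1 = Negz n by rewrite !NegzE; lia.
  by rewrite /= (big_ord_recr n.+1) /= opprD addrNK.
Qed.

Lemma eq_zsum c1 c2 : c1 =1 c2 -> zsum c1 =1 zsum c2.
Proof. by move=> eq_c [n|n] /=; under eq_bigr do rewrite eq_c. Qed.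

Lemma zsum_primitive (c h : int -> int) :
  (forall m, h (m + 1) = h m + c m) -> forall m, h m = h 0 + zsum c m.
Proof.
move=> hS.
have diff_const : forall m, h m - zsum c m = h 0 - zsum c 0.
  apply: (@int_succ_const _ (fun m => h m - zsum c m)) => m.
  by rewrite hS zsumS opprD addrACA subrr addr0.
by move=> m; rewrite -(subrK (zsum c m) (h m)) diff_const zsum0 subr0.
Qed.

Section ZvecCoordinates.
Variable E : finType.
Implicit Types (a : zvec E) (i x : E) (t : int).

Definition zset a x t : zvec E := [ffun y => if y == x then t else a y].

Lemma zset_id a x : zset a x (a x) = a.
Proof. by apply/ffunP => y; rewrite ffunE; case: eqP => // ->. Qed.

Lemma zsetS a x t : zset a x (t + 1) = shift (zset a x t) [set x].
Proof. by apply/ffunP => y; rewrite !ffunE inE; case: eqP; rewrite ?addr0. Qed.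

Lemma zset_shift a x t : zset (shift a [set x]) x t = zset a x t.
Proof. by apply/ffunP => y; rewrite !ffunE inE; case: eqP; rewrite ?addr0. Qed.

Lemma zset_shiftC a i x t : i != x ->
  zset (shift a [set i]) x t = shift (zset a x t) [set i].
Proof.
move=> ne_ix; apply/ffunP => y; rewrite !ffunE inE.
by case: eqP => // ->; rewrite eq_sym (negbTE ne_ix) addr0.
Qed.

Lemma shift1_at a x : shift a [set x] x = a x + 1.
Proof. by rewrite ffunE set11. Qed.

Lemma shift1_off a i x : i != x -> shift a [set i] x = a x.
Proof. by move=> ne_ix; rewrite ffunE inE eq_sym (negbTE ne_ix) addr0. Qed.

Lemma shift_set0 a : shift a set0 = a.
Proof. by apply/ffunP => y; rewrite ffunE inE addr0. Qed.

Lemma shiftU1 a i (J : {set E}) : i \notin J ->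
  shift a (i |: J) = shift (shift a [set i]) J.
Proof.
move=> iNJ; apply/ffunP => y; rewrite !ffunE !inE.
by case: eqVneq => [->|] /=; rewrite ?(negbTE iNJ) ?addr0.
Qed.

Lemma shift_invariant_const (T : Type) (h : zvec E -> T) :
  (forall a i, h (shift a [set i]) = h a) -> forall a, h a = h (zvec0 E).
Proof.
move=> h_inv.
have h_zset a x t : h (zset a x t) = h (zset a x 0).
  by apply: (@int_succ_const _ (fun t => h (zset a x t))) => k; rewrite zsetS.
suff h_supp (s : seq E) a : (forall y, y \notin s -> a y = 0) -> h a = h (zvec0 E).
  by move=> a; apply: (h_supp (enum E)) => y; rewrite mem_enum.
elim: s a => [|x s IH] a a_supp.
  by congr h; apply/ffunP => y; rewrite ffunE a_supp.
rewrite -(zset_id a x) h_zset; apply: IH => y yNs; rewrite ffunE.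
by case: eqVneq => // ne_yx; apply: a_supp; rewrite inE negb_or ne_yx.
Qed.

End ZvecCoordinates.

Section ClosedForms.
Variable E : finType.

Definition closed_form (f : zvec E -> E -> int) :=
  forall a i j, f a i + f (shift a [set i]) j = f a j + f (shift a [set j]) i.

Variable f : zvec E -> E -> int.
Hypothesis f_closed : closed_form f.

(** Integrating the [x]-component along the [x]-axis commutes, up to boundary
    terms, with a unit step in another direction [i]. *)
Lemma zsum_closed_shift a i x m :
  zsum (fun t => f (shift (zset a x t) [set i]) x) m =
  zsum (fun t => f (zset a x t) x) m + f (zset a x m) i - f (zset a x 0) i.
Proof.
have prim := @zsum_primitive (fun t => f (shift (zset a x t) [set i]) x)
  (fun m => zsum (fun t => f (zset a x t) x) m + f (zset a x m) i).
rewrite /= big_ord0 add0r in prim.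
rewrite prim => [|k]; first by rewrite addrC addKr.
by rewrite zsumS zsetS -addrA f_closed addrA.
Qed.

Lemma closed_form_exact_on (s : seq E) : exists G : zvec E -> int,
  forall a i, i \in s -> G (shift a [set i]) = G a + f a i.
Proof.
elim: s => [|x s [G G_shift]]; first by exists (fun=> 0).
exists (fun a => G (zset a x 0) + zsum (fun t => f (zset a x t) x) (a x)).
move=> a i; rewrite inE; case: eqVneq => [-> _|ne_ix /= i_s].
  rewrite !zset_shift shift1_at (eq_zsum _ (c2 := fun t => f (zset a x t) x)).
    by rewrite zsumS zset_id addrA.
  by move=> t; rewrite zset_shift.
rewrite zset_shiftC // G_shift // shift1_off //.
rewrite (eq_zsum _ (c2 := fun t => f (shift (zset a x t) [set i]) x)).
  by rewrite zsum_closed_shift zset_id; lia.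
by move=> t; rewrite zset_shiftC.
Qed.

Lemma closed_form_exact : exists G : zvec E -> int,
  forall a i, G (shift a [set i]) = G a + f a i.
Proof.
have [G G_shift] := closed_form_exact_on (enum E).
by exists G => a i; rewrite G_shift ?mem_enum.
Qed.

End ClosedForms.

Section MatroidFlock.
Variables (E : finType) (d : nat) (M : zvec E -> {set E} -> nat).
Hypothesis flockM : matroid_flock d M.

Lemma flock_rank0 a : M a set0 = 0%N.
Proof.
case: flockM => rk _ _; have [[le_card _ _] _] := rk a.
by have := le_card set0; rewrite cards0 leqn0 => /eqP.
Qed.

Lemma flock_rankU1 a i (J : {set E}) : i \notin J ->
  M a (i |: J) = (M a [set i] + M (shift a [set i]) J)%N.
Proof.
case: flockM => rk MF1 _ iNJ; have [[_ le_rank _] _] := rk a.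
have J_sub : J \subset ~: [set i] by rewrite subsetC sub1set inE.
by rewrite -(MF1 a i J J_sub) subnKC // le_rank // subsetUl.
Qed.

Lemma flock_singleton_closed : closed_form (fun a i => (M a [set i])%:Z).
Proof.
move=> a i j; case: (eqVneq i j) => [-> //|ne_ij].
have iNj : i \notin [set j] by rewrite inE.
have jNi : j \notin [set i] by rewrite inE eq_sym.
have := flock_rankU1 a iNj; have := flock_rankU1 a jNi; rewrite setUC; lia.
Qed.

Lemma flock_potential_shift (g : zvec E -> int) :
  (forall a i, g (shift a [set i]) = g a + (M a [set i])%:Z) ->
  forall a I, g (shift a I) = g a + (M a I)%:Z.
Proof.
move=> g_shift1 a I; have [n] := ubnP #|I|; elim: n a I => // n IH a I.
rewrite ltnS; case: (set_0Vmem I) => [-> _|[i i_I] card_I].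
  by rewrite shift_set0 flock_rank0 addr0.
have iNI' : i \notin I :\ i by rewrite setD11.
rewrite -(setD1K i_I) shiftU1 // flock_rankU1 // IH ?g_shift1; first lia.
by move: card_I; rewrite (cardsD1 i I) i_I.
Qed.

End MatroidFlock.

Theorem mainTheorem11 (E : finType) (d : nat) (M : zvec E -> {set E} -> nat) :
  matroid_flock d M ->
  exists! g : zvec E -> int,
    g (zvec0 E) = 0%R /\
    forall (alpha : zvec E) (I : {set E}),
      g (shift alpha I) = (g alpha + (M alpha I)%:Z)%R.
Proof.
move=> flockM.
have [G G_shift1] := closed_form_exact (flock_singleton_closed flockM).
pose g a := G a - G (zvec0 E).
have g_shift : forall a I, g (shift a I) = g a + (M a I)%:Z.
  by apply: (flock_potential_shift flockM) => a i; rewrite /g G_shift1 addrAC.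
exists g; split=> [|g' [g'0 g'_shift]]; first by split; first exact: subrr.
apply: functional_extensionality => a.
have g_g'_inv b i : g (shift b [set i]) - g' (shift b [set i]) = g b - g' b.
  by rewrite g_shift g'_shift opprD addrACA subrr addr0.
have := shift_invariant_const g_g'_inv a.
by rewrite g'0 /g !subrr => /subr0_eq.
Qed.
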